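(* Let $\lambda>0$, $d_{\mathrm H},d_{\mathrm V}>0$ and positive integers $N_{\mathrm H},N_{\mathrm V}$, $N=N_{\mathrm H}N_{\mathrm V}$. For $n=1,\dots,N$ let $i(n)=\mathrm{mod}(n-1,N_{\mathrm H})$, $j(n)=\lfloor (n-1)/N_{\mathrm H}\rfloor$ and $\mathbf u_n=[0,\ i(n)d_{\mathrm H},\ j(n)d_{\mathrm V}]^{\mathrm T}\in\mathbb R^3$. For angles $(\varphi,\theta)$ define the wave vector $\mathbf k(\varphi,\theta)=\frac{2\pi}{\lambda}[\cos\theta\cos\varphi,\ \cos\theta\sin\varphi,\ \sin\theta]^{\mathrm T}$ and the array response vector $\mathbf a(\varphi,\theta)=[e^{\mathrm i\,\mathbf k(\varphi,\theta)^{\mathrm T}\mathbf u_1},\dots,e^{\mathrm i\,\mathbf k(\varphi,\theta)^{\mathrm T}\mathbf u_N}]^{\mathrm T}\in\mathbb C^N$. Let $(\varphi,\theta)$ be random with probability density $f(\varphi,\theta)=\frac{\cos\theta}{2\pi}$ on $[-\pi/2,\pi/2]\times[-\pi/2,\pi/2]$ (isotropic scattering in the half-space in front of the surface), and let $\mathbf R=\mathbb E\{\mathbf a(\varphi,\theta)\mathbf a(\varphi,\theta)^{\mathrm H}\}\in\mathbb C^{N\times N}$. Then for all $n,m\in\{1,\dots,N\}$, $$[\mathbf R]_{n,m}=\mathrm{sinc}\!\left(\frac{2\|\mathbf u_n-\mathbf u_m\|}{\lambda}\right),$$ where $\mathrm{sinc}(x)=\sin(\pi x)/(\pi x)$ (with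 $\mathrm{sinc}(0)=1$).
   Context: This models a reconfigurable intelligent surface (RIS) of $N$ elements of size $d_{\mathrm H}\times d_{\mathrm V}$ placed edge-to-edge on a rectangular grid in the $yz$-plane, indexed row by row; $\lambda$ is the wavelength; $\varphi$ is the azimuth and $\theta$ the elevation angle of an impinging plane wave; $\mathrm i$ is the imaginary unit and ${}^{\mathrm H}$ denotes conjugate transpose. *)

From Stdlib Require Import Reals Lra Lia.
From Coquelicot Require Import Coquelicot.
Open Scope R_scope.

Definition cexpi (x : R) : C := (cos x, sin x).

Definition vec3 := (R * R * R)%type.
Definition dot3 (a b : vec3) : R :=
  let '(a1, a2, a3) := a in let '(b1, b2, b3) := b in a1*b1 + a2*b2 + a3*b3.
Definition sub3 (a b : vec3) : vec3 :=
  let '(a1, a2, a3) := a in let '(b1, b2, b3) := b in (a1-b1, a2-b2, a3-b3).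
Definition norm3 (a : vec3) : R := sqrt (dot3 a a).

Definition idx_i (NH n : nat) : nat := Nat.modulo (n - 1) NH.
Definition idx_j (NH n : nat) : nat := Nat.div (n - 1) NH.

Definition u_pos (dH dV : R) (NH n : nat) : vec3 :=
  (0, INR (idx_i NH n) * dH, INR (idx_j NH n) * dV).

Definition wavevec (lam phi theta : R) : vec3 :=
  (2*PI/lam * (cos theta * cos phi), 2*PI/lam * (cos theta * sin phi),
   2*PI/lam * sin theta).

Definition a_resp (lam dH dV : R) (NH n : nat) (phi theta : R) : C :=
  cexpi (dot3 (wavevec lam phi theta) (u_pos dH dV NH n)).

Definition pdf (phi theta : R) : R := cos theta / (2*PI).

(* [R]_{n,m} = E{ a_n conj(a_m) } = double integral over [-pi/2,pi/2]^2
   (iterated: inner over phi, outer over theta) of a_n conj(a_m) f. *)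
Definition Rcorr (lam dH dV : R) (NH n m : nat) : C :=
  RInt (V := C_R_CompleteNormedModule)
    (fun theta => RInt (V := C_R_CompleteNormedModule)
       (fun phi => Cmult (RtoC (pdf phi theta))
                     (Cmult (a_resp lam dH dV NH n phi theta)
                            (Cconj (a_resp lam dH dV NH m phi theta))))
       (-(PI/2)) (PI/2))
    (-(PI/2)) (PI/2).

Definition sinc (x : R) : R :=
  if Req_EM_T x 0 then 1 else sin (PI * x) / (PI * x).

From Stdlib Require Import Reals Lra Lia Nsatz.
From Coquelicot Require Import Coquelicot.
Open Scope R_scope.

(* The correlation is the mean of exp (i X) for the phase difference
   X = al cos th sin ph + be sin th, where (0, al, be) = (2 PI / lam) (u_n - u_m).
   The symmetry (th, ph) -> (-th, -ph) preserves the density and changes the sign of X, so the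
   imaginary part vanishes. The even moments are E[X^(2m)] = r^(2m) / (2m + 1) with
   r = sqrt (al^2 + be^2), those of the uniform law on [-r, r] (Archimedes' hat-box theorem):
   integrating the spherical Laplacian of X^(k+2) over the hemisphere gives a two-term
   recursion, with no boundary terms since the fluxes carry the factors cos ph and cos th.
   As |X| <= |al| + |be|, the cosine series converges uniformly and can be integrated termwise:
   E[cos X] = sum_m (-1)^m r^(2m) / (2m + 1)! = sin r / r. *)


Lemma continuity_2d_pt_pow (f : R -> R -> R) x y n :
  continuity_2d_pt f x y -> continuity_2d_pt (fun u v => f u v ^ n) x y.
Proof.
  intros Hf. induction n as [|n IH]; simpl.
  - apply continuity_2d_pt_const.
  - apply continuity_2d_pt_mult; assumption.
Qed.

Lemma continuity_2d_pt_cos (f : R -> R -> R) x y :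
  continuity_2d_pt f x y -> continuity_2d_pt (fun u v => cos (f u v)) x y.
Proof. intros Hf. apply continuity_1d_2d_pt_comp; [apply continuity_cos | exact Hf]. Qed.

Lemma continuity_2d_pt_sin (f : R -> R -> R) x y :
  continuity_2d_pt f x y -> continuity_2d_pt (fun u v => sin (f u v)) x y.
Proof. intros Hf. apply continuity_1d_2d_pt_comp; [apply continuity_sin | exact Hf]. Qed.

Ltac continuity_2d := unfold Rdiv; repeat first
  [ apply continuity_2d_pt_const | apply continuity_2d_pt_id1 | apply continuity_2d_pt_id2
  | apply continuity_2d_pt_plus | apply continuity_2d_pt_minus | apply continuity_2d_pt_mult
  | apply continuity_2d_pt_opp | apply continuity_2d_pt_pow | apply continuity_2d_pt_cos
  | apply continuity_2d_pt_sin ].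

Section JointlyContinuousIntegrand.

Variable F : R -> R -> R.
Hypothesis F_cont : forall x y, continuity_2d_pt F x y.

Lemma continuous_slice x y : continuous (F x) y.
Proof.
  apply filterlim_locally. intros eps.
  destruct (F_cont x y eps) as [d Hd]. exists d. intros t Ht.
  apply Hd; [rewrite Rminus_diag, Rabs_R0; apply cond_pos | exact Ht].
Qed.

Lemma ex_RInt_slice x a b : ex_RInt (F x) a b.
Proof.
  apply (ex_RInt_continuous (V := R_CompleteNormedModule)).
  intros y _. apply continuous_slice.
Qed.

Lemma continuous_RInt_param a b x0 : a <= b -> continuous (fun x => RInt (F x) a b) x0.
Proof.
  intros Hab. apply filterlim_locally. intros eps.
  assert (Heps' : 0 < eps / (b - a + 1)) by (apply Rdiv_lt_0_compat; [apply cond_pos | lra]).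
  destruct (uniform_continuity_2d_1d' F a b x0 (fun y _ => F_cont x0 y) (mkposreal _ Heps'))
    as [d Hd].
  exists d. intros x Hx.
  change (Rabs (x - x0) < d) in Hx.
  change (Rabs (RInt (F x) a b - RInt (F x0) a b) < eps).
  rewrite <- (RInt_minus (F x) (F x0)) by apply ex_RInt_slice.
  apply Rle_lt_trans with ((b - a) * (eps / (b - a + 1))).
  - apply (abs_RInt_le_const (fun y => F x y - F x0 y)); [exact Hab | |].
    + apply (ex_RInt_minus (V := R_NormedModule)); apply ex_RInt_slice.
    + intros y Hy. left. apply (Hd y x0 y x); try lra.
      * pose proof (cond_pos d). lra.
      * apply Rabs_le_between'. lra.
      * rewrite Rminus_diag, Rabs_R0. apply cond_pos.
  - pose proof (cond_pos eps).
    apply Rlt_le_trans with ((b - a + 1) * (eps / (b - a + 1))).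
    + apply Rmult_lt_compat_r; [exact Heps' | lra].
    + right. field. lra.
Qed.

Lemma ex_RInt_RInt_param a b c d : a <= b -> ex_RInt (fun x => RInt (F x) a b) c d.
Proof.
  intros Hab. apply (ex_RInt_continuous (V := R_CompleteNormedModule)).
  intros x _. apply continuous_RInt_param, Hab.
Qed.

End JointlyContinuousIntegrand.

Lemma is_derive_RInt_param_continuous (F DF : R -> R -> R) a b x :
  (forall x y, is_derive (fun s => F s y) x (DF x y)) ->
  (forall x y, continuity_2d_pt DF x y) ->
  (forall x y, continuity_2d_pt F x y) ->
  is_derive (fun x => RInt (F x) a b) x (RInt (DF x) a b).
Proof.
  intros HD HDc Hc.
  assert (HDF : forall s y, Derive (fun z => F z y) s = DF s y)
    by (intros s y; apply is_derive_unique, HD).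
  rewrite (RInt_ext (DF x) (fun y => Derive (fun s => F s y) x))
    by (intros y _; symmetry; apply HDF).
  apply is_derive_RInt_param.
  - apply filter_forall. intros s y _. eexists. apply HD.
  - intros y _. eapply continuity_2d_pt_ext; [|apply (HDc x y)].
    intros s t. symmetry. apply HDF.
  - apply filter_forall. intros s. apply ex_RInt_slice, Hc.
Qed.

Lemma is_RInt_RInt_divergence (u v Du Dv : R -> R -> R) a b :
  a <= b ->
  (forall x y, is_derive (fun t => u x t) y (Du x y)) ->
  (forall x y, is_derive (fun s => v s y) x (Dv x y)) ->
  (forall x y, continuity_2d_pt Du x y) ->
  (forall x y, continuity_2d_pt v x y) ->
  (forall x y, continuity_2d_pt Dv x y) ->
  (forall x, u x a = u x b) -> (forall y, v a y = v b y) ->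
  is_RInt (fun x => RInt (fun y => Du x y + Dv x y) a b) a b 0.
Proof.
  intros Hab Hu Hv cDu cv cDv Hua Hva.
  assert (Hinner : forall x, RInt (fun y => Du x y + Dv x y) a b = RInt (Dv x) a b).
  { intros x.
    assert (HDu : is_RInt (Du x) a b 0).
    { replace 0 with (minus (u x b) (u x a))
        by (rewrite Hua; apply (minus_eq_zero (G := R_AbelianGroup))).
      apply (is_RInt_derive (V := R_CompleteNormedModule)).
      - intros y _. apply Hu.
      - intros y _. apply continuous_slice, cDu. }
    apply (is_RInt_unique (V := R_CompleteNormedModule)).
    rewrite <- (Rplus_0_l (RInt (Dv x) a b)).
    apply (is_RInt_plus (V := R_NormedModule)); [exact HDu |].
    apply (RInt_correct (V := R_CompleteNormedModule)), ex_RInt_slice, cDv. }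
  apply (is_RInt_ext (fun x => RInt (Dv x) a b)); [intros x _; symmetry; apply Hinner |].
  replace 0 with (minus (RInt (v b) a b) (RInt (v a) a b))
    by (rewrite (RInt_ext (v b) (v a)) by (intros y _; symmetry; apply Hva);
        apply (minus_eq_zero (G := R_AbelianGroup))).
  apply (is_RInt_derive (V := R_CompleteNormedModule) (fun x => RInt (v x) a b)).
  - intros x _. apply is_derive_RInt_param_continuous; assumption.
  - intros x _. apply continuous_RInt_param; assumption.
Qed.

Lemma is_RInt_comp_opp_sym (f : R -> R) c l :
  is_RInt f (- c) c l -> is_RInt (fun x => f (- x)) (- c) c l.
Proof.
  intros Hf.
  rewrite <- (Ropp_involutive c) in Hf at 2.
  apply is_RInt_comp_opp, is_RInt_swap, (is_RInt_opp (V := R_NormedModule)) in Hf.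
  rewrite opp_opp in Hf.
  eapply is_RInt_ext; [| exact Hf].
  intros x _. apply opp_opp.
Qed.

Lemma RInt_odd (f : R -> R) c :
  (forall x, f (- x) = - f x) -> ex_RInt f (- c) c -> RInt f (- c) c = 0.
Proof.
  intros Hodd [l Hl].
  pose proof (is_RInt_comp_opp_sym f c l Hl) as Hl'.
  apply (is_RInt_ext _ (fun x => opp (f x))) in Hl'; [| intros x _; apply Hodd].
  rewrite (is_RInt_unique _ _ _ _ Hl).
  apply (is_RInt_opp (V := R_NormedModule)) in Hl.
  apply (filterlim_locally_unique (K := R_AbsRing) (V := R_NormedModule) _ _ _ Hl) in Hl'.
  change (- l = l) in Hl'. lra.
Qed.

Lemma is_RInt_sum_f_R0 (f : nat -> R -> R) (I : nat -> R) a b n :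
  (forall j, is_RInt (f j) a b (I j)) ->
  is_RInt (fun x => sum_f_R0 (fun j => f j x) n) a b (sum_f_R0 I n).
Proof.
  intros Hf. induction n as [|n IH]; simpl.
  - apply Hf.
  - apply (is_RInt_plus (V := R_NormedModule)); [exact IH | apply Hf].
Qed.

Lemma is_RInt_uniform_limit (f : nat -> R -> R) (g : R -> R) (I : nat -> R) (L a b : R) :
  (forall n, is_RInt (f n) a b (I n)) ->
  (forall eps, 0 < eps -> exists N, forall n x, (N <= n)%nat -> Rabs (f n x - g x) < eps) ->
  is_lim_seq I L -> is_RInt g a b L.
Proof.
  intros Hf Hunif HI.
  assert (Hfg : filterlim f eventually (locally (g : fct_UniformSpace R R_UniformSpace))).
  { apply filterlim_locally. intros eps.
    destruct (Hunif eps (cond_pos eps)) as [N HN].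
    exists N. intros n Hn x. apply HN, Hn. }
  destruct (filterlim_RInt (V := R_CompleteNormedModule) f a b eventually _ g I Hf Hfg)
    as [If [HIf Hg]].
  assert (HIf' : is_lim_seq I If) by exact HIf.
  apply is_lim_seq_unique in HI, HIf'.
  rewrite HI in HIf'. injection HIf' as ->. exact Hg.
Qed.

Lemma cos_series_uniform r : 0 < r -> forall eps, 0 < eps ->
  exists N, forall n x, (N <= n)%nat -> Rabs x < r ->
    Rabs (sum_f_R0 (fun j => cos_n j * x ^ (2 * j)) n - cos x) < eps.
Proof.
  intros Hr eps Heps.
  set (fn := fun j x => cos_n j * x ^ (2 * j)).
  pose proof (CVN_R_cos fn eq_refl) as Hcvn.
  set (cv := CVN_R_CVS fn Hcvn).
  assert (Hcos : forall x, cos x = SFL fn cv x).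
  { intros x. unfold cos, SFL.
    destruct (cv x) as [l Hl], (exist_cos (Rsqr x)) as [c Hc].
    symmetry. apply (UL_sequence _ _ _ Hl).
    intros e He. destruct (Hc e He) as [N HN]. exists N. intros n Hn.
    unfold SP. rewrite (sum_eq _ (fun j => cos_n j * Rsqr x ^ j)).
    - apply HN, Hn.
    - intros j _. unfold fn, Rsqr. rewrite pow_sqr. reflexivity. }
  destruct (CVN_CVU fn cv (mkposreal r Hr) (Hcvn (mkposreal r Hr)) eps Heps) as [N HN].
  exists N. intros n x Hn Hx.
  rewrite Rabs_minus_sym, Hcos. apply HN; [exact Hn |].
  unfold Boule; simpl. rewrite Rminus_0_r. exact Hx.
Qed.

Lemma sin_n_cos_n j : sin_n j = cos_n j / (2 * INR j + 1).
Proof.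
  unfold sin_n, cos_n.
  rewrite Nat.add_1_r, fact_simpl, mult_INR, S_INR, mult_INR.
  pose proof (INR_fact_lt_0 (2 * j)). pose proof (pos_INR j).
  simpl (INR 2). field. split; lra.
Qed.

Lemma is_lim_seq_sin_series_sinc r : 0 <= r ->
  is_lim_seq (fun n => sum_f_R0 (fun j => sin_n j * r ^ j) n) (sinc (sqrt r / PI)).
Proof.
  intros Hr. apply is_lim_seq_Reals.
  pose proof PI_RGT_0 as HPI.
  unfold sinc. destruct (Req_EM_T (sqrt r / PI) 0) as [H0 | H0].
  - assert (Hr0 : r = 0).
    { apply Rsqr_0_uniq. rewrite <- (Rsqr_sqrt r Hr).
      replace (sqrt r) with (sqrt r / PI * PI) by (field; lra). rewrite H0. unfold Rsqr. ring. }
    subst r. intros eps Heps. exists 0%nat. intros n _.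
    replace (sum_f_R0 (fun j => sin_n j * 0 ^ j) n) with 1.
    + unfold Rdist. rewrite Rminus_diag, Rabs_R0. exact Heps.
    + induction n as [|n IH]; simpl sum_f_R0.
      * unfold sin_n. simpl. field.
      * rewrite <- IH. simpl. ring.
  - assert (Hs : sqrt r <> 0) by (intros E; apply H0; rewrite E; unfold Rdiv; ring).
    replace (PI * (sqrt r / PI)) with (sqrt r) by (field; lra).
    unfold sin. destruct (exist_sin (Rsqr (sqrt r))) as [l Hl].
    rewrite Rsqr_sqrt in Hl by exact Hr.
    replace (sqrt r * l / sqrt r) with l by (field; exact Hs).
    exact Hl.
Qed.

Definition phase (al be th ph : R) : R := al * (cos th * sin ph) + be * sin th.

Definition phase_moment (al be : R) (k : nat) (th : R) : R :=
  RInt (fun ph => pdf ph th * phase al be th ph ^ k) (- (PI / 2)) (PI / 2).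

Lemma continuity_2d_pt_phase_moment_integrand al be k th ph :
  continuity_2d_pt (fun th ph => pdf ph th * phase al be th ph ^ k) th ph.
Proof. unfold pdf, phase. continuity_2d. Qed.

Definition phase_flux_ph (al be : R) (k : nat) (th ph : R) : R :=
  (INR k + 2) * phase al be th ph ^ S k * al * cos ph / (2 * PI).

Definition phase_flux_th (al be : R) (k : nat) (th ph : R) : R :=
  (INR k + 2) * phase al be th ph ^ S k * (be * cos th - al * (sin th * sin ph)) * cos th
  / (2 * PI).

Definition phase_flux_ph_deriv (al be : R) (k : nat) (th ph : R) : R :=
  (INR k + 2) * ((INR k + 1) * phase al be th ph ^ k * (al * cos th * cos ph) * (al * cos ph)
                 - phase al be th ph ^ S k * al * sin ph) / (2 * PI).

Definition phase_flux_th_deriv (al be : R) (k : nat) (th ph : R) : R :=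
  (INR k + 2) *
  ((INR k + 1) * phase al be th ph ^ k * (be * cos th - al * (sin th * sin ph)) ^ 2 * cos th
   - phase al be th ph ^ S k *
     (phase al be th ph * cos th + (be * cos th - al * (sin th * sin ph)) * sin th))
  / (2 * PI).

Lemma is_derive_phase_flux_ph al be k th ph :
  is_derive (fun p => phase_flux_ph al be k th p) ph (phase_flux_ph_deriv al be k th ph).
Proof.
  unfold phase_flux_ph, phase_flux_ph_deriv, phase. auto_derive; [exact I |].
  replace (match k with 0%nat => 1 | S _ => INR k + 1 end) with (INR k + 1)
    by (destruct k; simpl; ring).
  unfold Rdiv. cbn [pow]. ring.
Qed.

Lemma is_derive_phase_flux_th al be k th ph :
  is_derive (fun t => phase_flux_th al be k t ph) th (phase_flux_th_deriv al be k th ph).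
Proof.
  unfold phase_flux_th, phase_flux_th_deriv, phase. auto_derive; [exact I |].
  replace (match k with 0%nat => 1 | S _ => INR k + 1 end) with (INR k + 1)
    by (destruct k; simpl; ring).
  unfold Rdiv. cbn [pow]. ring.
Qed.

(* In the chart (th, ph) of the unit sphere the flux is pdf times the gradient of X^(k+2), so its
   divergence is pdf times the spherical Laplacian of X^(k+2). Since X = phase al be restricts the
   linear form v |-> (0, al, be) . v, this is the classical identity
   Lap (w . v)^n = n (n - 1) |w|^2 (w . v)^(n - 2) - n (n + 1) (w . v)^n  with n = k + 2. *)
Lemma phase_flux_divergence al be k th ph :
  phase_flux_ph_deriv al be k th ph + phase_flux_th_deriv al be k th ph
  = (INR k + 2) * (INR k + 1) * (al ^ 2 + be ^ 2) * (pdf ph th * phase al be th ph ^ k)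
    - (INR k + 2) * (INR k + 3) * (pdf ph th * phase al be th ph ^ S (S k)).
Proof.
  unfold phase_flux_ph_deriv, phase_flux_th_deriv, pdf, Rdiv.
  set (c := / (2 * PI)). cbn [pow].
  set (Y := phase al be th ph ^ k). unfold phase.
  pose proof (sin2_cos2 th) as Hth. pose proof (sin2_cos2 ph) as Hph.
  unfold Rsqr in Hth, Hph. set (K := INR k) in *.
  nsatz.
Qed.

Lemma ex_RInt_phase_moment_integrand al be k th c d :
  ex_RInt (fun ph => pdf ph th * phase al be th ph ^ k) c d.
Proof.
  apply (ex_RInt_slice (fun th ph => pdf ph th * phase al be th ph ^ k)).
  apply continuity_2d_pt_phase_moment_integrand.
Qed.

Lemma ex_RInt_phase_moment al be k c d : ex_RInt (phase_moment al be k) c d.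
Proof.
  apply (ex_RInt_RInt_param (fun th ph => pdf ph th * phase al be th ph ^ k)).
  - intros th ph. apply continuity_2d_pt_phase_moment_integrand.
  - pose proof PI_RGT_0. lra.
Qed.

Lemma is_RInt_phase_moment_recursion al be k :
  is_RInt (fun th => (INR k + 2) * (INR k + 1) * (al ^ 2 + be ^ 2) * phase_moment al be k th
                     - (INR k + 2) * (INR k + 3) * phase_moment al be (S (S k)) th)
    (- (PI / 2)) (PI / 2) 0.
Proof.
  pose proof PI_RGT_0 as HPI.
  eapply is_RInt_ext; [| apply (is_RInt_RInt_divergence (phase_flux_ph al be k)
                                  (phase_flux_th al be k))].
  - intros th _. unfold phase_moment.
    rewrite (RInt_ext _ (fun ph =>
      (INR k + 2) * (INR k + 1) * (al ^ 2 + be ^ 2) * (pdf ph th * phase al be th ph ^ k)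
      - (INR k + 2) * (INR k + 3) * (pdf ph th * phase al be th ph ^ S (S k))))
      by (intros ph _; apply phase_flux_divergence).
    apply (is_RInt_unique (V := R_CompleteNormedModule)).
    apply (is_RInt_minus (V := R_NormedModule)); apply (is_RInt_scal (V := R_NormedModule));
      apply (RInt_correct (V := R_CompleteNormedModule)), ex_RInt_phase_moment_integrand.
  - lra.
  - apply is_derive_phase_flux_ph.
  - apply is_derive_phase_flux_th.
  - intros. unfold phase_flux_ph_deriv, phase. continuity_2d.
  - intros. unfold phase_flux_th, phase. continuity_2d.
  - intros. unfold phase_flux_th_deriv, phase. continuity_2d.
  - intros th. unfold phase_flux_ph. rewrite cos_neg, cos_PI2. unfold Rdiv. ring.
  - intros ph. unfold phase_flux_th. rewrite cos_neg, cos_PI2. unfold Rdiv. ring.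
Qed.

Lemma RInt_phase_moment_SS al be k :
  (INR k + 3) * RInt (phase_moment al be (S (S k))) (- (PI / 2)) (PI / 2)
  = (INR k + 1) * (al ^ 2 + be ^ 2) * RInt (phase_moment al be k) (- (PI / 2)) (PI / 2).
Proof.
  pose proof (pos_INR k).
  pose proof (is_RInt_phase_moment_recursion al be k) as Hzero.
  set (c1 := (INR k + 2) * (INR k + 1) * (al ^ 2 + be ^ 2)) in Hzero.
  set (c2 := (INR k + 2) * (INR k + 3)) in Hzero.
  assert (Hdiff : is_RInt (fun th => c1 * phase_moment al be k th
                                     - c2 * phase_moment al be (S (S k)) th) (- (PI / 2)) (PI / 2)
                    (c1 * RInt (phase_moment al be k) (- (PI / 2)) (PI / 2)
                     - c2 * RInt (phase_moment al be (S (S k))) (- (PI / 2)) (PI / 2))).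
  { apply (is_RInt_minus (V := R_NormedModule)); apply (is_RInt_scal (V := R_NormedModule));
      apply (RInt_correct (V := R_CompleteNormedModule)), ex_RInt_phase_moment. }
  apply (is_RInt_unique (V := R_CompleteNormedModule)) in Hzero, Hdiff.
  rewrite Hzero in Hdiff. unfold c1, c2 in Hdiff.
  apply (Rmult_eq_reg_l (INR k + 2)); lra.
Qed.

Lemma RInt_phase_moment_0 al be : RInt (phase_moment al be 0) (- (PI / 2)) (PI / 2) = 1.
Proof.
  pose proof PI_RGT_0 as HPI.
  rewrite (RInt_ext _ (fun th => cos th / 2)).
  2:{ intros th _. unfold phase_moment, pdf. simpl pow.
      rewrite (RInt_ext _ (fun _ => cos th / (2 * PI))) by (intros; apply Rmult_1_r).
      rewrite RInt_const. unfold scal; simpl; unfold mult; simpl. field. lra. }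
  apply (is_RInt_unique (V := R_CompleteNormedModule)).
  replace 1 with (minus (sin (PI / 2) / 2) (sin (- (PI / 2)) / 2))
    by (rewrite sin_neg, sin_PI2; unfold minus, plus, opp; simpl; field).
  apply (is_RInt_derive (V := R_CompleteNormedModule) (fun t => sin t / 2)).
  - intros th _. auto_derive; [exact I | unfold Rdiv; ring_simplify; reflexivity].
  - intros th _. apply (ex_derive_continuous (K := R_AbsRing) (V := R_NormedModule)).
    auto_derive. exact I.
Qed.

Lemma RInt_phase_moment_even al be m :
  RInt (phase_moment al be (2 * m)) (- (PI / 2)) (PI / 2) = (al ^ 2 + be ^ 2) ^ m / (2 * INR m + 1).
Proof.
  induction m as [|m IH].
  - rewrite RInt_phase_moment_0. simpl. field.
  - pose proof (pos_INR m).
    replace (2 * S m)%nat with (S (S (2 * m))) by lia.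
    apply (Rmult_eq_reg_l (INR (2 * m) + 3)); [| rewrite mult_INR; simpl; lra].
    rewrite RInt_phase_moment_SS, IH, mult_INR, (S_INR m). simpl (INR 2). simpl pow.
    field. lra.
Qed.

Lemma Rabs_phase_le al be th ph : Rabs (phase al be th ph) <= Rabs al + Rabs be.
Proof.
  unfold phase. eapply Rle_trans; [apply Rabs_triang |].
  rewrite !Rabs_mult.
  pose proof (Rabs_pos al). pose proof (Rabs_pos be).
  assert (Hc : Rabs (cos th) <= 1) by (apply Rabs_le, COS_bound).
  assert (Hs : Rabs (sin ph) <= 1) by (apply Rabs_le, SIN_bound).
  assert (Hs' : Rabs (sin th) <= 1) by (apply Rabs_le, SIN_bound).
  pose proof (Rabs_pos (cos th)). pose proof (Rabs_pos (sin ph)).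
  assert (Rabs (cos th) * Rabs (sin ph) <= 1) by nra.
  nra.
Qed.

Lemma Rabs_pdf_le ph th : Rabs (pdf ph th) <= 1.
Proof.
  pose proof PI2_1.
  unfold pdf, Rdiv. rewrite Rabs_mult, Rabs_inv, (Rabs_right (2 * PI)) by lra.
  assert (Hc : Rabs (cos th) <= 1) by (apply Rabs_le, COS_bound).
  assert (Hinv : 0 < / (2 * PI) <= 1).
  { split; [apply Rinv_0_lt_compat; lra |].
    rewrite <- Rinv_1. apply Rinv_le_contravar; lra. }
  pose proof (Rabs_pos (cos th)). nra.
Qed.

Lemma is_RInt_pdf_cos_series al be n th :
  is_RInt (fun ph => pdf ph th * sum_f_R0 (fun j => cos_n j * phase al be th ph ^ (2 * j)) n)
    (- (PI / 2)) (PI / 2) (sum_f_R0 (fun j => cos_n j * phase_moment al be (2 * j) th) n).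
Proof.
  apply (is_RInt_ext
    (fun ph => sum_f_R0 (fun j => cos_n j * (pdf ph th * phase al be th ph ^ (2 * j))) n)).
  - intros ph _. rewrite scal_sum. apply sum_eq. intros j _. ring.
  - apply is_RInt_sum_f_R0. intros j.
    apply (is_RInt_scal (V := R_NormedModule)).
    apply (RInt_correct (V := R_CompleteNormedModule)), ex_RInt_phase_moment_integrand.
Qed.

Lemma phase_moment_cos_series_uniform al be eps : 0 < eps ->
  exists N, forall n th, (N <= n)%nat ->
    Rabs (sum_f_R0 (fun j => cos_n j * phase_moment al be (2 * j) th) n
          - RInt (fun ph => pdf ph th * cos (phase al be th ph)) (- (PI / 2)) (PI / 2)) < eps.
Proof.
  intros Heps. pose proof PI_RGT_0. pose proof PI_4.
  set (r := Rabs al + Rabs be + 1).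
  assert (Hr : 0 < r) by (unfold r; pose proof (Rabs_pos al); pose proof (Rabs_pos be); lra).
  destruct (cos_series_uniform r Hr (eps / 8)) as [N HN]; [lra |].
  exists N. intros n th Hn.
  set (Sn := fun ph => sum_f_R0 (fun j => cos_n j * phase al be th ph ^ (2 * j)) n).
  pose proof (is_RInt_pdf_cos_series al be n th) as Hseries.
  assert (Hcos : ex_RInt (fun ph => pdf ph th * cos (phase al be th ph)) (- (PI / 2)) (PI / 2)).
  { apply (ex_RInt_slice (fun th ph => pdf ph th * cos (phase al be th ph))).
    intros. unfold pdf, phase. continuity_2d. }
  rewrite <- (is_RInt_unique _ _ _ _ Hseries).
  rewrite <- (RInt_minus (fun ph => pdf ph th * Sn ph)
                         (fun ph => pdf ph th * cos (phase al be th ph)));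
    [| eexists; exact Hseries | exact Hcos].
  apply Rle_lt_trans with ((PI / 2 - - (PI / 2)) * (eps / 8)); [| nra].
  apply (abs_RInt_le_const (fun ph => pdf ph th * Sn ph - pdf ph th * cos (phase al be th ph))).
  - lra.
  - apply (ex_RInt_minus (V := R_NormedModule)); [eexists; exact Hseries | exact Hcos].
  - intros ph _. rewrite <- Rmult_minus_distr_l, Rabs_mult, <- (Rmult_1_l (eps / 8)).
    apply Rmult_le_compat; try apply Rabs_pos; [apply Rabs_pdf_le |].
    left. apply HN; [exact Hn |].
    pose proof (Rabs_phase_le al be th ph). unfold r. lra.
Qed.

Lemma RInt_RInt_pdf_cos_phase al be :
  RInt (fun th => RInt (fun ph => pdf ph th * cos (phase al be th ph)) (- (PI / 2)) (PI / 2))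
    (- (PI / 2)) (PI / 2)
  = sinc (sqrt (al ^ 2 + be ^ 2) / PI).
Proof.
  apply (is_RInt_unique (V := R_CompleteNormedModule)).
  apply (is_RInt_uniform_limit
    (fun n th => sum_f_R0 (fun j => cos_n j * phase_moment al be (2 * j) th) n) _
    (fun n => sum_f_R0 (fun j => sin_n j * (al ^ 2 + be ^ 2) ^ j) n)).
  - intros n. apply is_RInt_sum_f_R0. intros j.
    replace (sin_n j * _)
      with (cos_n j * RInt (phase_moment al be (2 * j)) (- (PI / 2)) (PI / 2))
      by (rewrite sin_n_cos_n, RInt_phase_moment_even; unfold Rdiv; ring).
    apply (is_RInt_scal (V := R_NormedModule)).
    apply (RInt_correct (V := R_CompleteNormedModule)), ex_RInt_phase_moment.
  - apply phase_moment_cos_series_uniform.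
  - apply is_lim_seq_sin_series_sinc. nra.
Qed.

Lemma phase_opp al be th ph : phase al be (- th) ph = - phase al be th (- ph).
Proof. unfold phase. rewrite cos_neg, !sin_neg. ring. Qed.

Lemma RInt_RInt_pdf_sin_phase al be :
  RInt (fun th => RInt (fun ph => pdf ph th * sin (phase al be th ph)) (- (PI / 2)) (PI / 2))
    (- (PI / 2)) (PI / 2) = 0.
Proof.
  set (F := fun th ph => pdf ph th * sin (phase al be th ph)).
  assert (HF : forall th ph, continuity_2d_pt F th ph)
    by (intros; unfold F, pdf, phase; continuity_2d).
  apply (RInt_odd (fun th => RInt (F th) (- (PI / 2)) (PI / 2))).
  - intros th.
    pose proof (RInt_correct (V := R_CompleteNormedModule) _ _ _
      (ex_RInt_slice F HF th (- (PI / 2)) (PI / 2))) as Hth.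
    apply is_RInt_comp_opp_sym, (is_RInt_opp (V := R_NormedModule)) in Hth.
    apply (is_RInt_unique (V := R_CompleteNormedModule)).
    eapply is_RInt_ext; [| exact Hth].
    intros ph _. unfold F, pdf. rewrite cos_neg, phase_opp, sin_neg.
    unfold opp; simpl. ring.
  - apply ex_RInt_RInt_param; [exact HF |]. pose proof PI_RGT_0. lra.
Qed.

Lemma RInt_C_pair (f g : R -> R) a b :
  ex_RInt f a b -> ex_RInt g a b ->
  RInt (V := C_R_CompleteNormedModule) (fun x => (f x, g x)) a b = (RInt f a b, RInt g a b).
Proof.
  intros Hf Hg. apply (is_RInt_unique (V := C_R_CompleteNormedModule)).
  apply (is_RInt_fct_extend_pair (U := R_NormedModule) (V := R_NormedModule));
    apply (RInt_correct (V := R_CompleteNormedModule)); assumption.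
Qed.

Lemma RInt_RInt_C_pair (f g : R -> R -> R) a b :
  a <= b -> (forall x y, continuity_2d_pt f x y) -> (forall x y, continuity_2d_pt g x y) ->
  RInt (V := C_R_CompleteNormedModule)
    (fun x => RInt (V := C_R_CompleteNormedModule) (fun y => (f x y, g x y)) a b) a b
  = (RInt (fun x => RInt (f x) a b) a b, RInt (fun x => RInt (g x) a b) a b).
Proof.
  intros Hab Hf Hg.
  rewrite (RInt_ext (V := C_R_CompleteNormedModule) _
             (fun x => (RInt (f x) a b, RInt (g x) a b)))
    by (intros x _; apply RInt_C_pair; apply ex_RInt_slice; assumption).
  apply RInt_C_pair; apply ex_RInt_RInt_param; assumption.
Qed.

Lemma cexpi_mult_conj p q : Cmult (cexpi p) (Cconj (cexpi q)) = cexpi (p - q).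
Proof.
  unfold cexpi, Cmult, Cconj; simpl.
  rewrite cos_minus, sin_minus. f_equal; ring.
Qed.

Lemma RtoC_mult_cexpi r x : Cmult (RtoC r) (cexpi x) = (r * cos x, r * sin x).
Proof. unfold cexpi, Cmult, RtoC; simpl. f_equal; ring. Qed.

Lemma dot3_sub3 k u w : dot3 k u - dot3 k w = dot3 k (sub3 u w).
Proof. destruct k as [[k1 k2] k3], u as [[u1 u2] u3], w as [[w1 w2] w3]. simpl. ring. Qed.

Lemma dot3_wavevec_yz lam ph th y z :
  dot3 (wavevec lam ph th) (0, y, z) = phase (2 * PI / lam * y) (2 * PI / lam * z) th ph.
Proof. unfold dot3, wavevec, phase. ring. Qed.

Lemma sub3_u_pos dH dV NH n m :
  sub3 (u_pos dH dV NH n) (u_pos dH dV NH m)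
  = (0, (INR (idx_i NH n) - INR (idx_i NH m)) * dH, (INR (idx_j NH n) - INR (idx_j NH m)) * dV).
Proof. unfold sub3, u_pos. f_equal; [f_equal |]; ring. Qed.

Lemma sinc_arg_yz lam y z : 0 < lam ->
  2 * norm3 (0, y, z) / lam = sqrt ((2 * PI / lam * y) ^ 2 + (2 * PI / lam * z) ^ 2) / PI.
Proof.
  intros Hlam. pose proof PI_RGT_0.
  unfold norm3, dot3.
  replace ((2 * PI / lam * y) ^ 2 + (2 * PI / lam * z) ^ 2)
    with ((2 * PI / lam) ^ 2 * (0 * 0 + y * y + z * z)) by ring.
  rewrite sqrt_mult, sqrt_pow2; [field; lra | | apply pow2_ge_0 | nra].
  apply Rlt_le, Rdiv_lt_0_compat; lra.
Qed.

Theorem proposition1 (lam dH dV : R) (NH NV : nat)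
  (Hlam : 0 < lam) (HdH : 0 < dH) (HdV : 0 < dV)
  (HNH : (1 <= NH)%nat) (HNV : (1 <= NV)%nat) :
  forall n m : nat, (1 <= n <= NH * NV)%nat -> (1 <= m <= NH * NV)%nat ->
  Rcorr lam dH dV NH n m =
  RtoC (sinc (2 * norm3 (sub3 (u_pos dH dV NH n) (u_pos dH dV NH m)) / lam)).
Proof.
  (* Only lam > 0 matters: the identity holds for every index pair and every spacing. *)
  intros n m _ _.
  rewrite sub3_u_pos, sinc_arg_yz by exact Hlam.
  set (al := 2 * PI / lam * ((INR (idx_i NH n) - INR (idx_i NH m)) * dH)).
  set (be := 2 * PI / lam * ((INR (idx_j NH n) - INR (idx_j NH m)) * dV)).
  unfold Rcorr.
  rewrite (RInt_ext (V := C_R_CompleteNormedModule) _ (fun th =>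
    RInt (V := C_R_CompleteNormedModule)
      (fun ph => (pdf ph th * cos (phase al be th ph), pdf ph th * sin (phase al be th ph)))
      (- (PI / 2)) (PI / 2))).
  2:{ intros th _. apply RInt_ext. intros ph _.
      unfold a_resp. rewrite cexpi_mult_conj, dot3_sub3, sub3_u_pos, dot3_wavevec_yz.
      apply RtoC_mult_cexpi. }
  rewrite RInt_RInt_C_pair, RInt_RInt_pdf_cos_phase, RInt_RInt_pdf_sin_phase.
  - reflexivity.
  - pose proof PI_RGT_0. lra.
  - intros. unfold pdf, phase. continuity_2d.
  - intros. unfold pdf, phase. continuity_2d.
Qed.
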